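(* There is a constant $c>0$ such that, for every $n$, if the adversary generating the dynamic graphs $G_1=(V,E_1),G_2=(V,E_2),\dots$ on $n$ nodes is allowed to choose the edge sets $E_1,E_2,\dots$ adaptively without having to preserve node degrees, then there is such an adaptive adversary and an initial assignment of opinions for which the expected consensus time of the standard voter model is at least $\Omega\big((n/c)^{n/c}\big)$.
   Context: Standard voter model on a sequence of graphs $G_1,G_2,\dots$ on a common vertex set $V$ of $n$ nodes: every node initially holds an opinion; in each synchronous round $t$, every node independently chooses a neighbour in $G_t$ uniformly at random and with probability $1/2$ adopts that neighbour's opinion (as at the start of the round), otherwise keeps its own. An adaptive adversary chooses $G_{t+1}$ knowing the opinions of all nodes up to round $t$. The consensus time is the first round after which all nodes hold the same opinion. *)

From HB Require Import structures.
From mathcomp Require Import all_boot all_order all_algebra.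
From mathcomp Require Import all_classical all_reals all_analysis.
Set Implicit Arguments. Unset Strict Implicit. Unset Printing Implicit Defensive.
Import Order.TTheory GRing.Theory Num.Theory.
Local Open Scope ring_scope.

(* Opinions are taken in 'I_n: any initial assignment of
   arbitrary opinions to n nodes is, up to relabelling of opinions, one with
   at most n distinct opinions, so this loses no generality. *)
Definition config (n : nat) := {ffun 'I_n -> 'I_n}.

Definition valid_graph (n : nat) (e : rel 'I_n) : Prop :=
  (forall u v, e u v = e v u) /\ (forall u, e u u = false) /\
  (forall u v, connect e u v).

Definition consensus (n : nat) (x : config n) : bool :=
  [forall u, forall v, x u == x v].

(* Probability that, in one synchronous round of the standard voter model on
   graph e, configuration x moves to configuration y: each node v
   independently keeps its opinion w.p. 1/2, and otherwise adopts the opinion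
   (at the start of the round) of a uniformly random neighbour in e. *)
Definition vm_trans (R : realType) (n : nat) (e : rel 'I_n)
    (x y : config n) : R :=
  \prod_(v : 'I_n)
    ((x v == y v)%:R / 2 +
     #|[set u | e v u && (x u == y v)]|%:R / (2 * #|[set u | e v u]|%:R)).

(* An adaptive adversary: given the history of opinion configurations
   x_0, ..., x_t (as a sequence), it chooses the graph G_{t+1}. *)
Definition adversary (n : nat) := seq (config n) -> rel 'I_n.

Definition valid_adversary (n : nat) (A : adversary n) : Prop :=
  forall h, valid_graph (A h).

(* surv A h x t = probability that the process, currently with history h
   (whose last element is the current configuration x), is in a
   non-consensus configuration at each of the current time and the next t
   rounds. *)
Fixpoint surv (R : realType) (n : nat) (A : adversary n)
    (h : seq (config n)) (x : config n) (t : nat) : R :=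
  if consensus x then 0 else
  match t with
  | 0 => 1
  | t'.+1 => \sum_(y : config n) vm_trans R (A h) x y * surv R A (rcons h y) y t'
  end.

(* P(T > t), where T = min { t | x_t is a consensus configuration }. *)
Definition prob_T_gt (R : realType) (n : nat) (A : adversary n)
    (x0 : config n) (t : nat) : R := surv R A [:: x0] x0 t.

(* E[T] = sum_{t >= 0} P(T > t), in the extended reals (may be +oo). *)
Definition expected_consensus_time (R : realType) (n : nat) (A : adversary n)
    (x0 : config n) : \bar R :=
  (\sum_(0 <= t <oo) (prob_T_gt R A x0 t)%:E)%E.

From HB Require Import structures.
From mathcomp Require Import all_boot all_order all_algebra.
From mathcomp Require Import all_classical all_reals all_analysis.
From mathcomp Require Import zify ring lra.
Import Order.TTheory GRing.Theory Num.Theory.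
Set Implicit Arguments. Unset Strict Implicit. Unset Printing Implicit Defensive.
Local Open Scope ring_scope.

(* The adversary keeps two opinions and, in every round, lets
   at most two nodes change: a minority node u is linked to the whole minority
   and to one majority node w, the only neighbours of w are u and another
   majority node z, and all remaining edges join nodes of equal opinion.  If
   the minority has m nodes, it then grows by one with probability about 1/4
   and shrinks by one with probability only 3/(8m).  Hence, for r and K of
   order n, the potential r^-(m-K) (equal to 1 once m <= K, in particular at
   consensus) increases in expectation by at most d = r^-(n/2-1-K) per round,
   the error coming only from m close to n/2.  Starting from a balanced
   configuration, where the potential is at most 1/4, consensus therefore has
   probability at most 3/4 during the first r^(n/2-2-K) >= (n/32)^(n/32)
   rounds. *)

Definition fupd (I : finType) (J : Type) (f : {ffun I -> J}) (i : I) (a : J) :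
    {ffun I -> J} :=
  [ffun j => if j == i then a else f j].

Lemma fupdE (I : finType) (J : Type) (f : {ffun I -> J}) i a j :
  fupd f i a j = if j == i then a else f j.
Proof. by rewrite ffunE. Qed.

Lemma fupd_id (I : finType) (J : Type) (f : {ffun I -> J}) i : fupd f i (f i) = f.
Proof. by apply/ffunP => j; rewrite fupdE; case: eqP => [->|]. Qed.

Section TwoFreeCoordinates.
Variables (R : comPzRingType) (I J : finType) (F : I -> J -> R) (x : {ffun I -> J}).
Variables (u w : I).
Hypotheses (uw : u != w) (F_frozen : forall v a, v != u -> v != w -> F v a = (x v == a)%:R).

Lemma prod_two_free (y : {ffun I -> J}) :
  \prod_v F v (y v) = F u (y u) * F w (y w) * (y == fupd (fupd x u (y u)) w (y w))%:R.
Proof.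
rewrite (bigD1 u) //= (bigD1 w) 1?eq_sym //= mulrA.
have [->|ne] := eqVneq y _.
  rewrite mulr1 big1 ?mulr1 // => v /andP[vu vw].
  by rewrite F_frozen // !fupdE (negbTE vu) (negbTE vw) eqxx.
have [v] : exists v, y v != fupd (fupd x u (y u)) w (y w) v.
  apply/existsP; move: ne; apply: contraR; rewrite negb_exists => /forallP yE.
  by apply/eqP/ffunP => v; apply/eqP; move: (yE v); rewrite negbK.
rewrite !fupdE; have [->|vw] := eqVneq v w; first by rewrite eqxx.
have [->|vu] := eqVneq v u; first by rewrite eqxx.
move=> yvx; rewrite (bigD1 v) /=; last by rewrite vu vw.
by rewrite (F_frozen _ vu vw) (eq_sym (x v)) (negbTE yvx) mul0r !mulr0.
Qed.

Lemma sum_prod_two_free (g : {ffun I -> J} -> R) :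
  \sum_(y : {ffun I -> J}) (\prod_v F v (y v)) * g y =
  \sum_a \sum_b F u a * F w b * g (fupd (fupd x u a) w b).
Proof.
pose y_ a b : {ffun I -> J} := fupd (fupd x u a) w b.
have y_u a b : y_ a b u = a by rewrite /y_ !fupdE (negbTE uw) eqxx.
have y_w a b : y_ a b w = b by rewrite /y_ fupdE eqxx.
have termE (y : {ffun I -> J}) : (\prod_v F v (y v)) * g y =
    \sum_a \sum_b (y == y_ a b)%:R * (F u a * F w b * g (y_ a b)).
  rewrite prod_two_free (bigD1 (y u)) //= (bigD1 (y w)) //= -/(y_ _ _).
  rewrite [X in _ + X]big1 => [|a /eqP ya]; last first.
    rewrite big1 // => b _; case: eqP => [yE|_]; last by rewrite mul0r.
    by case: ya; rewrite yE y_u.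
  rewrite addr0 [X in _ + X]big1 => [|b /eqP yb]; last first.
    case: eqP => [yE|_]; last by rewrite mul0r.
    by case: yb; rewrite yE y_w.
  rewrite addr0; case: eqP => [yE|_]; last by rewrite mulr0 !mul0r.
  by rewrite mulr1 mul1r -yE.
rewrite (eq_bigr _ (fun y _ => termE y)) exchange_big /=.
apply: eq_bigr => a _; rewrite exchange_big /=; apply: eq_bigr => b _.
rewrite (bigD1 (y_ a b)) //= eqxx mul1r big1 ?addr0 // => y /negbTE ->.
by rewrite mul0r.
Qed.

End TwoFreeCoordinates.

(* [vm_trans R e x y] unfolds to [\prod_v vm_marginal R e x v (y v)]. *)
Definition vm_marginal (R : realType) n (e : rel 'I_n) (x : config n) (v a : 'I_n) : R :=
  (x v == a)%:R / 2 + #|[set t | e v t && (x t == a)]|%:R / (2 * #|[set t | e v t]|%:R).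

Lemma vm_trans_ge0 (R : realType) n (e : rel 'I_n) (x y : config n) : 0 <= vm_trans R e x y.
Proof. by apply: prodr_ge0 => v _; apply: addr_ge0; apply: divr_ge0. Qed.

Lemma sum_vm_marginal (R : realType) n (e : rel 'I_n) (x : config n) (v : 'I_n) :
  (exists t, e v t) -> \sum_a vm_marginal R e x v a = 1.
Proof.
case=> t0 evt0; rewrite big_split /= -!mulr_suml.
have -> : \sum_a ((x v == a)%:R : R) = 1.
  by rewrite (bigD1 (x v)) //= eqxx big1 ?addr0 // => a; rewrite eq_sym => /negbTE ->.
have -> : \sum_a (#|[set t | e v t && (x t == a)]|%:R : R) = #|[set t | e v t]|%:R.
  rewrite -natr_sum; congr _%:R; rewrite -sum1_card [RHS](partition_big x xpredT) //=.
  by apply: eq_bigr => a _; rewrite -sum1_card; apply: eq_bigl => t; rewrite !inE.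
have : (#|[set t | e v t]|%:R : R) != 0.
  by rewrite pnatr_eq0 -lt0n; apply/card_gt0P; exists t0; rewrite inE.
by move=> ?; field.
Qed.

Lemma sum_vm_trans (R : realType) n (e : rel 'I_n) (x : config n) :
  (forall v, exists t, e v t) -> \sum_y vm_trans R e x y = 1.
Proof.
move=> nbr; rewrite -(bigA_distr_bigA (vm_marginal R e x)) /=.
by rewrite big1 // => v _; apply: sum_vm_marginal.
Qed.

Lemma valid_graph_nbr n (e : rel 'I_n) (v w : 'I_n) :
  valid_graph e -> v != w -> exists t, e v t.
Proof.
case=> _ [_ e_conn]; rewrite eq_sym => wv; have /connectP[[|t p] /= evp wE] := e_conn v w.
  by rewrite wE eqxx in wv.
by exists t; case/andP: evp.
Qed.

Lemma surv_ge0 (R : realType) n (A : adversary n) h x t : 0 <= surv R A h x t.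
Proof.
elim: t h x => [|t IH] h x /=; case: (consensus x) => //.
by apply: sumr_ge0 => y _; apply: mulr_ge0; [apply: vm_trans_ge0|apply: IH].
Qed.

Lemma expected_consensus_time_ge (R : realType) n (A : adversary n) x0 (N : nat) (p : R) :
  (forall t, (t < N)%N -> p <= prob_T_gt R A x0 t) ->
  ((N%:R * p)%:E <= expected_consensus_time R A x0)%E.
Proof.
move=> p_le; apply: le_trans (nneseries_lim_ge N _); last first.
  by move=> t _ _; rewrite lee_fin; apply: surv_ge0.
have -> : N%:R * p = \sum_(0 <= t < N) p by rewrite sumr_const_nat subn0 mulr_natl.
rewrite sumEFin lee_fin.
by apply: ler_sum_nat => t /andP[_]; apply: p_le.
Qed.

Definition markov_adversary n (x0 : config n) (G : config n -> rel 'I_n) : adversary n :=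
  fun h => G (last x0 h).

Section PotentialBound.
Variables (R : realType) (n : nat) (G : config n -> rel 'I_n) (phi : config n -> R) (d : R).
Hypotheses (n_gt1 : (1 < n)%N) (G_valid : forall x, valid_graph (G x)).
Hypotheses (d_ge0 : 0 <= d) (phi_ge0 : forall x, 0 <= phi x).
Hypothesis phi_lt1_consensus : forall x, phi x < 1 -> consensus x = false.
Hypothesis phi_drift :
  forall x, phi x < 1 -> \sum_y vm_trans R (G x) x y * phi y <= phi x + d.

Lemma surv_markov_ge x0 t h :
  1 - phi (last x0 h) - t.+1%:R * d <= surv R (markov_adversary x0 G) h (last x0 h) t.
Proof.
have phi_ge1 t' h' : 1 <= phi (last x0 h') ->
    1 - phi (last x0 h') - t'.+1%:R * d <= surv R (markov_adversary x0 G) h' (last x0 h') t'.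
  move=> phi1; have := surv_ge0 R (markov_adversary x0 G) h' (last x0 h') t'.
  by have := mulr_ge0 (ler0n R t'.+1) d_ge0; lra.
elim: t h => [|t IH] h; have [phi1|/phi_ge1 //] := ltP (phi (last x0 h)) 1.
  by rewrite /= phi_lt1_consensus // mul1r; have := phi_ge0 (last x0 h); have := d_ge0; lra.
rewrite /= phi_lt1_consensus // /markov_adversary; set x := last x0 h in phi1 *.
apply: le_trans (_ : \sum_y vm_trans R (G x) x y * (1 - phi y - t.+1%:R * d) <= _); last first.
  apply: ler_sum => y _; apply: ler_wpM2l; first exact: vm_trans_ge0.
  by have := IH (rcons h y); rewrite last_rcons.
have sum1 : \sum_y vm_trans R (G x) x y = 1.
  apply: sum_vm_trans => v; have [w] : exists w, w \in [set~ v].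
    by apply/card_gt0P; rewrite cardsC1 card_ord; lia.
  by rewrite !inE eq_sym; apply: valid_graph_nbr.
have -> : \sum_y vm_trans R (G x) x y * (1 - phi y - t.+1%:R * d) =
    (1 - t.+1%:R * d) - \sum_y vm_trans R (G x) x y * phi y.
  rewrite -[X in X - _]mul1r -sum1 mulr_suml -sumrB.
  by apply: eq_bigr => y _; ring.
by have := phi_drift phi1; rewrite -[t.+2]addn1 natrD; lra.
Qed.

Lemma prob_T_gt_markov_ge x0 t :
  1 - phi x0 - t.+1%:R * d <= prob_T_gt R (markov_adversary x0 G) x0 t.
Proof. exact: (surv_markov_ge x0 t [:: x0]). Qed.

End PotentialBound.

Lemma sum_supp2 (V : nmodType) (I : finType) (F : I -> V) i j : i != j ->
  (forall k, k != i -> k != j -> F k = 0) -> \sum_k F k = F i + F j.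
Proof.
move=> ij F0; rewrite (bigD1 i) //= (bigD1 j) 1?eq_sym //=.
by rewrite big1 ?addr0 // => k /andP[]; apply: F0.
Qed.

Definition holders n (x : config n) (c : 'I_n) : {set 'I_n} := [set v | x v == c].

Lemma card_holders_fupd n (x : config n) (v a c : 'I_n) :
  (#|holders (fupd x v a) c| + (x v == c) = #|holders x c| + (a == c))%N.
Proof.
rewrite /holders (cardsD1 v [set t | x t == c]) (cardsD1 v [set t | fupd x v a t == c]).
rewrite !inE fupdE eqxx.
have -> : [set t | fupd x v a t == c] :\ v = [set t | x t == c] :\ v.
  by apply/setP => t; rewrite !inE fupdE; case: eqP.
lia.
Qed.

Section BridgeGraph.
Variables (n : nat) (x : config n) (u w z : 'I_n).

Definition bridge_graph : rel 'I_n := fun a b =>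
  (a != b) && [|| [&& x a == x b, a != w & b != w],
                  [&& a == w & (b == u) || (b == z)] |
                  [&& b == w & (a == u) || (a == z)]].

Hypotheses (xuw : x u != x w) (xzw : x z = x w) (zw : z != w).
Hypothesis two_opinions : forall v : 'I_n, (x v == x u) || (x v == x w).

Let uw : u != w. Proof. by apply: contraNneq xuw => ->. Qed.
Let uz : u != z. Proof. by apply: contraNneq xuw => ->; rewrite xzw. Qed.

Lemma bridge_graph_sym : symmetric bridge_graph.
Proof.
move=> a b; rewrite /bridge_graph (eq_sym b a) (eq_sym (x b)).
by case: (a != b); case: (x a == x b); case: (a == w); case: (b == w);
  case: (a == u); case: (b == u); case: (a == z); case: (b == z).
Qed.

Lemma bridge_graph_valid : valid_graph bridge_graph.
Proof.
split; first exact: bridge_graph_sym.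
split=> [a|]; first by rewrite /bridge_graph eqxx.
have to_w a : connect bridge_graph a w.
  have [->|aw] := eqVneq a w; first exact: connect0.
  have uw_edge : bridge_graph u w by rewrite /bridge_graph uw !eqxx !orbT.
  have zw_edge : bridge_graph z w by rewrite /bridge_graph zw !eqxx !orbT.
  have [->|au] := eqVneq a u; first exact: connect1.
  have [->|az] := eqVneq a z; first exact: connect1.
  case/orP: (two_opinions a) => /eqP xa.
    apply: connect_trans (connect1 _) (connect1 uw_edge).
    by rewrite /bridge_graph au xa eqxx aw uw.
  apply: connect_trans (connect1 _) (connect1 zw_edge).
  by rewrite /bridge_graph az xa xzw eqxx aw zw.
move=> a b; apply: connect_trans (to_w a) _.
by rewrite (sym_connect_sym bridge_graph_sym) to_w.
Qed.

Lemma bridge_nbr_other (v t : 'I_n) : v != u -> v != w -> bridge_graph v t -> x t = x v.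
Proof.
move=> vu vw; rewrite /bridge_graph (negbTE vu) (negbTE vw) /=.
by case/andP=> _ /orP[/andP[/eqP -> _]|/andP[/eqP -> /eqP ->]].
Qed.

Lemma bridge_nbr_u t : bridge_graph u t = ((x t == x u) && (t != u)) || (t == w).
Proof.
rewrite /bridge_graph (negbTE uw) (negbTE uz) eqxx /=.
have [->|tw] := eqVneq t w; first by rewrite uw /= !orbT.
by rewrite !orbF (eq_sym u t) (eq_sym (x u)) andbT andbC.
Qed.

Lemma bridge_nbr_w t : bridge_graph w t = (t == u) || (t == z).
Proof.
rewrite /bridge_graph eqxx /=.
have [->|tw] := eqVneq t w.
  by rewrite eqxx /= (eq_sym w u) (negbTE uw) (eq_sym w z) (negbTE zw).
by rewrite andbF /= orbF.
Qed.

Variable R : realType.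
Let a_u : R := (2 * #|holders x (x u)|%:R)^-1.

Lemma bridge_marginal_other (v c : 'I_n) : v != u -> v != w ->
  vm_marginal R bridge_graph x v c = (x v == c)%:R.
Proof.
move=> vu vw; have [t vt] := valid_graph_nbr bridge_graph_valid vw.
rewrite /vm_marginal.
have -> : [set t | bridge_graph v t && (x t == c)] =
    if x v == c then [set t | bridge_graph v t] else finset.set0.
  apply/setP => t'; rewrite !inE; case evt: (bridge_graph v t') => /=.
    by rewrite (bridge_nbr_other vu vw evt); case: (x v == c); rewrite ?inE.
  by case: (x v == c); rewrite ?inE ?evt.
have deg0 : (#|[set t | bridge_graph v t]|%:R : R) != 0.
  by rewrite pnatr_eq0 -lt0n; apply/card_gt0P; exists t; rewrite inE.
by case: (x v == c); rewrite ?cards0 /=; field.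
Qed.

Lemma bridge_marginal_u c :
  vm_marginal R bridge_graph x u c = if c == x u then 1 - a_u else if c == x w then a_u else 0.
Proof.
have nbrE : [set t | bridge_graph u t] = w |: (holders x (x u) :\ u).
  by apply/setP => t; rewrite !inE bridge_nbr_u orbC andbC.
have xwu : (x w == x u) = false by apply/negbTE; rewrite eq_sym.
have degE : #|[set t | bridge_graph u t]| = #|holders x (x u)|.
  rewrite nbrE cardsU1 !inE xwu /= (cardsD1 u (holders x (x u))) inE eqxx.
  by rewrite andbF.
rewrite /vm_marginal degE /a_u.
have [->|cxu] := eqVneq c (x u).
  have -> : [set t | bridge_graph u t && (x t == x u)] = holders x (x u) :\ u.
    apply/setP => t; rewrite !inE bridge_nbr_u.
    have [->|_] := eqVneq t w; first by rewrite xwu !andbF.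
    by rewrite orbF; case: (x t == x u); rewrite ?andbT ?andbF.
  rewrite (cardsD1 u (holders x (x u))) inE eqxx /= natrD.
  have : (1 + #|holders x (x u) :\ u|%:R : R) != 0 by rewrite addrC natr1 pnatr_eq0.
  by move=> ?; field.
have [->|cxw] := eqVneq c (x w).
  have -> : [set t | bridge_graph u t && (x t == x w)] = [set w].
    apply/setP => t; rewrite !inE bridge_nbr_u.
    have [->|_] := eqVneq t w; first by rewrite orbT eqxx.
    by have [->|] := eqVneq (x t) (x u); rewrite ?(negbTE xuw) ?andbF ?orbF.
  by rewrite cards1 mul0r add0r div1r.
have -> : [set t | bridge_graph u t && (x t == c)] = finset.set0.
  apply/setP => t; rewrite !inE bridge_nbr_u.
  have [->|_] := eqVneq t w; first by rewrite [x w == c]eq_sym (negbTE cxw) andbF.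
  by case: eqP => [->|]; rewrite ?[x u == c]eq_sym ?(negbTE cxu) ?andbF.
by rewrite cards0 !mul0r add0r.
Qed.

Lemma bridge_marginal_w c :
  vm_marginal R bridge_graph x w c = if c == x u then 4^-1 else if c == x w then 3 / 4 else 0.
Proof.
have nbrE : [set t | bridge_graph w t] = [set u; z].
  by apply/setP => t; rewrite !inE bridge_nbr_w.
have colE : [set t | bridge_graph w t && (x t == c)] =
    [set t | (t == u) && (x u == c)] :|: [set t | (t == z) && (x w == c)].
  apply/setP => t; rewrite !inE bridge_nbr_w.
  have [->|_] := eqVneq t u; first by rewrite (negbTE uz) /= orbF.
  by rewrite /=; case: eqP => [->|]; rewrite ?xzw.
have disj :
    [set t | (t == u) && (x u == c)] :&: [set t | (t == z) && (x w == c)] = finset.set0.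
  by apply/setP => t; rewrite !inE; case: eqP => //= ->; rewrite (negbTE uz) andbF.
have card_pt (p : 'I_n) (b : bool) : #|[set t | (t == p) && b]| = b.
  case: b; last by apply/eqP; rewrite cards_eq0; apply/eqP/setP => t; rewrite !inE andbF.
  by rewrite (_ : [set t | _] = [set p]) ?cards1 //; apply/setP => t; rewrite !inE andbT.
rewrite /vm_marginal nbrE cards2 uz colE cardsU disj cards0 subn0 !card_pt.
have [->|cxu] := eqVneq c (x u).
  by rewrite [x w == x u]eq_sym (negbTE xuw) /=; field.
rewrite [x w == c]eq_sym.
have [_|_] := eqVneq c (x w); first by rewrite /=; field.
by rewrite /= !mul0r addr0.
Qed.

Lemma bridge_step (f : config n -> R) :
  \sum_y vm_trans R bridge_graph x y * f y =
  (1 - a_u) / 4 * f (fupd x w (x u)) + (1 - a_u) * (3 / 4) * f x +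
  a_u / 4 * f (fupd (fupd x u (x w)) w (x u)) + a_u * (3 / 4) * f (fupd x u (x w)).
Proof.
have -> : \sum_y vm_trans R bridge_graph x y * f y =
    \sum_(y : config n) (\prod_v vm_marginal R bridge_graph x v (y v)) * f y by [].
rewrite (sum_prod_two_free uw bridge_marginal_other).
have Mw0 a b : b != x u -> b != x w ->
    vm_marginal R bridge_graph x u a * vm_marginal R bridge_graph x w b *
    f (fupd (fupd x u a) w b) = 0.
  by move=> bu bw; rewrite bridge_marginal_w (negbTE bu) (negbTE bw) mulr0 mul0r.
rewrite (sum_supp2 xuw) => [|a au aw]; last first.
  by rewrite big1 // => b _; rewrite bridge_marginal_u (negbTE au) (negbTE aw) !mul0r.
rewrite (sum_supp2 xuw (Mw0 (x u))) (sum_supp2 xuw (Mw0 (x w))).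
have xwu : (x w == x u) = false by apply/negbTE; rewrite eq_sym.
have keep_w : fupd (fupd x u (x w)) w (x w) = fupd x u (x w).
  by apply/ffunP => t; rewrite !fupdE; case: eqP => // ->; case: ifP.
rewrite !bridge_marginal_u !bridge_marginal_w !eqxx xwu !fupd_id keep_w.
ring.
Qed.

End BridgeGraph.

Lemma bridge_drift_ineq (R : realFieldType) (a rho G P d : R) :
  0 < a -> a <= 1 / 2 -> a * rho <= 1 / 8 -> 0 < G -> 0 < P -> 0 <= d ->
  (P * rho = G /\ 2 <= rho) \/ (P <= d /\ rho * G <= d) ->
  (1 - a) / 4 * P + (1 - a) * (3 / 4) * G + a / 4 * G + a * (3 / 4) * (rho * G) <= G + d.
Proof.
move=> a_gt0 a_le arho G_gt0 P_gt0 d_ge0 [[PG rho2]|[Pd rGd]].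
  have P2 : P * 2 <= G by rewrite -PG ler_pM2l.
  have arG : a * rho * G <= 1 / 8 * G by rewrite ler_pM2r.
  have aP : 0 <= a * P by rewrite mulr_ge0 ?ltW.
  have aG : 0 <= a * G by rewrite mulr_ge0 ?ltW.
  nra.
have aPd : (1 - a) * P <= (1 - a) * d by rewrite ler_pM2l //; lra.
have arGd : a * (rho * G) <= a * d by rewrite ler_pM2l.
have aG : 0 <= a * G by rewrite mulr_ge0 ?ltW.
have ad : a * d <= d / 2.
  by rewrite mulrC; apply: ler_wpM2l => //; lra.
nra.
Qed.

Section GeometricPotential.
Variables (R : realType) (r K : nat).
Hypothesis r_gt1 : (1 < r)%N.

(* The subtraction [j - K] truncates, so the potential is [1] on [0 .. K]. *)
Definition pot (j : nat) : R := (r%:R ^+ (j - K))^-1.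

Let r_gt0 : (0 : R) < r%:R. Proof. by rewrite ltr0n; lia. Qed.

Lemma pot_gt0 j : 0 < pot j.
Proof. by rewrite invr_gt0 exprn_gt0. Qed.

Lemma pot_eq1 j : (j <= K)%N -> pot j = 1.
Proof. by move=> jK; rewrite /pot (eqP (_ : j - K == 0)%N) ?expr0 ?invr1 // subn_eq0. Qed.

Lemma potS j : (K <= j)%N -> pot j.+1 * r%:R = pot j.
Proof. by move=> Kj; rewrite /pot subSn // exprS invfM mulrAC mulVf ?mul1r ?gt_eqF. Qed.

Lemma pot_anti j j' : (j <= j')%N -> pot j' <= pot j.
Proof.
move=> jj; rewrite /pot lef_pV2 ?posrE ?exprn_gt0 //.
by apply: ler_weXn2l; [rewrite ler1n; lia | exact: leq_sub2r].
Qed.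

Lemma pot_drift n m (a := (2 * m%:R)^-1 : R) :
  (4 * r <= m)%N -> (K < m)%N -> (m <= n - m)%N ->
  (1 - a) / 4 * pot (minn m.+1 (n - m.+1)) + (1 - a) * (3 / 4) * pot m +
    a / 4 * pot m + a * (3 / 4) * pot m.-1 <= pot m + pot (n./2 - 1).
Proof.
move=> m4r Km mnm.
have [Km1 m_gt0] : (K <= m.-1)%N /\ (0 < m)%N by lia.
have m_ge1 : (1 : R) <= m%:R by rewrite ler1n.
have a_gt0 : 0 < a by rewrite invr_gt0 mulr_gt0 // ltr0n.
have a_le : a <= 1 / 2 by rewrite /a div1r lef_pV2 ?posrE ?mulr_gt0 ?ltr0n //; lra.
have ar : a * r%:R <= 1 / 8.
  rewrite /a mulrC ler_pdivrMr ?mulr_gt0 ?ltr0n //.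
  have : (4 * r%:R : R) <= m%:R by rewrite -natrM ler_nat.
  lra.
have predE : pot m.-1 = r%:R * pot m by rewrite -(potS Km1) prednK // mulrC.
rewrite predE; apply: bridge_drift_ineq; rewrite ?pot_gt0 ?(ltW (pot_gt0 _)) //.
case: (leqP m.+1 (n - m.+1)) => [grow|no_grow]; [left | right].
  by rewrite potS ?ler_nat // ltnW.
by rewrite -predE; split; apply: pot_anti; lia.
Qed.

Lemma pot_le_quarter j : (K.+2 <= j)%N -> pot j <= 1 / 4.
Proof.
move=> Kj; apply: le_trans (pot_anti Kj) _; rewrite /pot subSn // subSn // subnn.
rewrite div1r lef_pV2 ?posrE ?exprn_gt0 // expr2 -natrM ler_nat; lia.
Qed.

Lemma pot_tail j t : (K < j)%N -> (t < r ^ (j - K).-1)%N -> t.+1%:R * pot j <= r%:R^-1.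
Proof.
move=> Kj tr; rewrite /pot -(prednK (_ : 0 < j - K)%N) ?subn_gt0 // exprS invfM mulrCA.
rewrite -[leRHS]mulr1 ler_pM2l ?invr_gt0 // ler_pdivrMr ?exprn_gt0 // mul1r.
by rewrite -natrX ler_nat.
Qed.

End GeometricPotential.

Section BridgeAdversary.
Variables (n : nat) (o1 o2 : 'I_n).

Definition bicolored (x : config n) : bool := [forall v, (x v == o1) || (x v == o2)].

Definition minority (x : config n) : 'I_n :=
  if (#|holders x o1| <= #|holders x o2|)%N then o1 else o2.
Definition majority (x : config n) : 'I_n :=
  if (#|holders x o1| <= #|holders x o2|)%N then o2 else o1.
Definition minority_size (x : config n) : nat := minn #|holders x o1| #|holders x o2|.

(* The default [o1] is never used: see [bridge_readyP]. *)
Definition bridge_u (x : config n) := odflt o1 [pick v | x v == minority x].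
Definition bridge_w (x : config n) := odflt o1 [pick v | x v == majority x].
Definition bridge_z (x : config n) :=
  odflt o1 [pick v | (x v == majority x) && (v != bridge_w x)].

Definition bridge_ready (x : config n) := bicolored x && (1 < minority_size x)%N.

(* Outside [bridge_ready] any valid graph will do, since the potential [phi]
   below is then already [1]. *)
Definition adversary_graph (x : config n) : rel 'I_n :=
  if bridge_ready x then bridge_graph x (bridge_u x) (bridge_w x) (bridge_z x)
  else fun a b => a != b.

Lemma card_minority x : #|holders x (minority x)| = minority_size x.
Proof. by rewrite /minority /minority_size; case: leqP; lia. Qed.

Lemma card_majority x : #|holders x (majority x)| = maxn #|holders x o1| #|holders x o2|.
Proof. by rewrite /majority; case: leqP; lia. Qed.

Lemma bicolored_fupd x (v c : 'I_n) :
  bicolored x -> (c == o1) || (c == o2) -> bicolored (fupd x v c).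
Proof. by move=> /forallP bic c12; apply/forallP => t; rewrite fupdE; case: ifP. Qed.

Hypothesis o12 : o1 != o2.

Lemma card_holders_bicolored x : bicolored x -> (#|holders x o1| + #|holders x o2| = n)%N.
Proof.
move=> /forallP bic; rewrite -[RHS]card_ord -(cardsC (holders x o1)); congr (_ + _)%N.
apply: eq_card => v; rewrite !inE; have /orP[] := bic v => /eqP ->.
  by rewrite eqxx (negbTE o12).
by rewrite eqxx eq_sym o12.
Qed.

Lemma bridge_readyP x : bridge_ready x ->
  [/\ x (bridge_u x) = minority x, x (bridge_u x) != x (bridge_w x),
      x (bridge_z x) = x (bridge_w x), bridge_z x != bridge_w x &
      forall v, (x v == x (bridge_u x)) || (x v == x (bridge_w x))].
Proof.
case/andP=> bic size_gt1.
have maj_gt1 : (1 < #|holders x (majority x)|)%N.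
  by rewrite card_majority; rewrite /minority_size in size_gt1; lia.
have xu : x (bridge_u x) = minority x.
  rewrite /bridge_u; case: pickP => [v /eqP //|none].
  have /card_gt0P[v] : (0 < #|holders x (minority x)|)%N by rewrite card_minority; lia.
  by rewrite inE none.
have xw : x (bridge_w x) = majority x.
  rewrite /bridge_w; case: pickP => [v /eqP //|none].
  have /card_gt0P[v] : (0 < #|holders x (majority x)|)%N by lia.
  by rewrite inE none.
have [xz zw] : x (bridge_z x) = majority x /\ bridge_z x != bridge_w x.
  rewrite /bridge_z; case: pickP => [v /andP[/eqP -> ->] //|none].
  move: maj_gt1; rewrite (cardsD1 (bridge_w x)) inE xw eqxx add1n ltnS.
  by case/card_gt0P => v; rewrite !inE andbC none.
have min_maj : minority x != majority x.
  by rewrite /minority /majority; case: ifP; rewrite // eq_sym.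
split; rewrite ?xu ?xw ?xz //.
move=> v; move/forallP: bic => /(_ v); rewrite /minority /majority.
by case: ifP => _; rewrite // orbC.
Qed.

Lemma adversary_graph_valid x : valid_graph (adversary_graph x).
Proof.
rewrite /adversary_graph; case: ifP => [/bridge_readyP[_ xuw xzw zw bic] | _].
  exact: bridge_graph_valid.
split=> [a b|]; first by rewrite eq_sym.
split=> [a|a b]; first by rewrite eqxx.
by have [->|ab] := eqVneq a b; [exact: connect0 | exact: connect1].
Qed.

Variables (R : realType) (r K : nat).

Definition phi (x : config n) : R := if bicolored x then pot R r K (minority_size x) else 1.

Lemma phi_ge0 : (1 < r)%N -> forall x, 0 <= phi x.
Proof. by move=> r_gt1 x; rewrite /phi; case: ifP => _ //; exact/ltW/pot_gt0. Qed.

Lemma phi_lt1 x : phi x < 1 -> bicolored x /\ (K < minority_size x)%N.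
Proof.
rewrite /phi; case: ifP => [bic|_]; last by rewrite ltxx.
by case: leqP => [sK|//]; rewrite pot_eq1 ?ltxx.
Qed.

Lemma phi_lt1_consensus x : phi x < 1 -> consensus x = false.
Proof.
case/phi_lt1 => bic size_gt; apply/negbTE/forallP => all_eq.
have [v] : exists v, v \in holders x o1.
  by apply/card_gt0P; move: size_gt; rewrite /minority_size; lia.
have [w] : exists w, w \in holders x o2.
  by apply/card_gt0P; move: size_gt; rewrite /minority_size; lia.
rewrite !inE => /eqP xw /eqP xv.
by move/forallP: (all_eq v) => /(_ w) /eqP; rewrite xv xw; apply/eqP.
Qed.

Lemma phi_bicolored x (c : 'I_n) : bicolored x -> (c == o1) || (c == o2) ->
  phi x = pot R r K (minn #|holders x c| (n - #|holders x c|)).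
Proof.
move=> bic /orP[] /eqP ->; have := card_holders_bicolored bic;
  rewrite /phi bic /minority_size => sum_n; congr pot; lia.
Qed.

Lemma phi_drift : (1 < r)%N -> (4 * r <= K.+1)%N -> forall x, phi x < 1 ->
  \sum_y vm_trans R (adversary_graph x) x y * phi y <= phi x + pot R r K (n./2 - 1).
Proof.
move=> r_gt1 rK x /[dup] phi1 /phi_lt1[bic Km].
have sum_n := card_holders_bicolored bic.
have [m_le m1_le] : (minority_size x <= n - minority_size x)%N /\
    ((minority_size x).-1 <= n - (minority_size x).-1)%N by rewrite /minority_size; lia.
have [m_gt0 m4r] : (0 < minority_size x)%N /\ (4 * r <= minority_size x)%N by lia.
have ready : bridge_ready x by rewrite /bridge_ready bic; lia.
have [xu xuw xzw zw bic_uw] := bridge_readyP ready.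
rewrite /adversary_graph ready bridge_step //.
set u := bridge_u x in xu xuw xzw zw bic_uw *.
set w := bridge_w x in xuw xzw zw bic_uw *.
have uw : u != w by apply: contraNneq xuw => ->.
have xwu : (x w == x u) = false by apply/negbTE; rewrite eq_sym.
have [cu cw] : ((x u == o1) || (x u == o2)) /\ ((x w == o1) || (x w == o2)).
  by move/forallP: bic => bic; split; apply: bic.
rewrite !(phi_bicolored _ cu) ?bicolored_fupd //.
have := card_holders_fupd x w (x u) (x u).
have := card_holders_fupd x u (x w) (x u).
have := card_holders_fupd (fupd x u (x w)) w (x u) (x u).
rewrite fupdE (eq_sym w u) (negbTE uw) !eqxx xwu xu card_minority.
set m := minority_size x in Km m_le m1_le m_gt0 m4r *.
rewrite !addn0 !addn1 => c_swap /(congr1 predn) c_down c_up.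
rewrite /= in c_down; rewrite c_down prednK // in c_swap.
rewrite c_up c_swap c_down (minn_idPl m_le) (minn_idPl m1_le).
exact: pot_drift.
Qed.

Definition balanced : config n := [ffun v : 'I_n => if (v < n./2)%N then o1 else o2].

Lemma card_ord_lt k : (k <= n)%N -> #|[set v : 'I_n | (v < k)%N]| = k.
Proof.
move=> kn; have -> : [set v : 'I_n | (v < k)%N] = widen_ord kn @: 'I_k.
  apply/setP => v; rewrite inE; apply/idP/imsetP => [vk|[i _ ->]]; last by rewrite /= ltn_ord.
  by exists (Ordinal vk) => //; apply: val_inj.
by rewrite card_imset ?card_ord // => i j /(congr1 val) /= /val_inj.
Qed.

Lemma phi_balanced : phi balanced = pot R r K n./2.
Proof.
have bic : bicolored balanced.
  by apply/forallP => v; rewrite ffunE; case: ifP; rewrite eqxx ?orbT.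
rewrite (phi_bicolored (c := o1)) ?eqxx //.
have -> : holders balanced o1 = [set v : 'I_n | (v < n./2)%N].
  apply/setP => v; rewrite !inE ffunE; case: ifP; rewrite ?eqxx // eq_sym.
  by move=> _; apply/negbTE.
rewrite card_ord_lt; last by rewrite -divn2 leq_div.
by rewrite (minn_idPl (_ : n./2 <= n - n./2)%N) //; lia.
Qed.

End BridgeAdversary.

Lemma powR_self_le_expr (R : realType) (y : R) (r D : nat) :
  (0 < r)%N -> 0 <= y -> y <= r%:R -> y <= D%:R -> y `^ y <= r%:R ^+ D.
Proof.
move=> r_gt0 y_ge0 yr yD; rewrite -powR_mulrn //.
apply: le_trans (_ : r%:R `^ y <= _).
  by apply: ge0_ler_powR; rewrite ?nnegrE // (le_trans y_ge0).
by apply: ler_powR; rewrite // ler1n.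
Qed.

Theorem mainTheorem7 (R : realType) :
  exists c : R, 0 < c /\
  exists C : R, 0 < C /\
  exists N : nat, forall n : nat, (N <= n)%N ->
  exists (A : adversary n) (x0 : config n),
    valid_adversary A /\
    ((C * (n%:R / c) `^ (n%:R / c))%:E <= expected_consensus_time R A x0)%E.
Proof.
exists 32; split => //; exists (1 / 4); split; first lra.
exists 64%N => n n_ge64.
have [n_gt0 n_gt1] : (0 < n)%N /\ (1 < n)%N by lia.
pose o1 := Ordinal n_gt0; pose o2 := Ordinal n_gt1.
have o12 : o1 != o2 by [].
pose r := (n %/ 16)%N; pose K := (n %/ 4)%N; pose D := (n./2 - 2 - K)%N.
have [r_gt1 rK KD] : [/\ (1 < r)%N, (4 * r <= K.+1)%N & (K < n./2 - 1)%N] by split; lia.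
pose x0 := balanced o1 o2.
exists (markov_adversary x0 (adversary_graph o1 o2)), x0.
split=> [h|]; first exact: adversary_graph_valid.
apply: le_trans (expected_consensus_time_ge (N := (r ^ D)%N) (p := 1 / 4) _).
  rewrite lee_fin mulrC natrX ler_pM2r; last lra.
  by apply: powR_self_le_expr; rewrite ?divr_ge0 ?ler_pdivrMr // -?natrM ?ler_nat; lia.
move=> t tD; apply: (le_trans _ (prob_T_gt_markov_ge n_gt1 (adversary_graph_valid o12)
  (ltW (pot_gt0 R K r_gt1 _)) (phi_ge0 o1 o2 R K r_gt1)
  (phi_lt1_consensus (R := R) (r := r) (K := K) o12) (phi_drift o12 r_gt1 rK) x0 t)).
have phi0 : phi o1 o2 R r K x0 <= 1 / 4 by rewrite phi_balanced //; apply: pot_le_quarter; lia.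
have tail : t.+1%:R * pot R r K (n./2 - 1) <= r%:R^-1.
  by apply: pot_tail => //; rewrite (_ : (n./2 - 1 - K).-1 = D) //; lia.
have r_inv : (r%:R : R)^-1 <= 1 / 2.
  by rewrite div1r lef_pV2 ?posrE ?ltr0n ?ler_nat //; lia.
lra.
Qed.
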